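(* Let $\varphi\colon A\to B$ and $\psi\colon B\to C$ be local homomorphisms of noetherian local rings with $\varphi$ surjective. Then $\operatorname{rd}(\psi\circ\varphi)=\operatorname{rd}(\varphi)+\operatorname{rd}(\psi)$.
   Context: All rings are commutative and noetherian with identity. A local homomorphism $\varphi\colon (A,m,K)\to(B,n,L)$ satisfies $\varphi(m)\subseteq n$. The regularity defect $\operatorname{rd}(\varphi)$ is the $L$-dimension of the kernel of the natural $L$-linear map $m/m^2\otimes_K L\to n/n^2$, $\bar x\otimes\bar b\mapsto \overline{\varphi(x)b}$. *)

From HB Require Import structures.
From mathcomp Require Import all_boot all_algebra.
Set Implicit Arguments. Unset Strict Implicit. Unset Printing Implicit Defensive.
Import GRing.Theory.
Local Open Scope ring_scope.

Definition maxideal (R : comUnitRingType) (x : R) : Prop := ~~ (x \is a GRing.unit).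

Definition is_ideal (R : comUnitRingType) (I : R -> Prop) : Prop :=
  [/\ I 0, (forall x y, I x -> I y -> I (x + y)) & (forall a x, I x -> I (a * x))].

Definition in_ideal_gen (R : comUnitRingType) (s : seq R) (x : R) : Prop :=
  exists c : 'I_(size s) -> R, x = \sum_(i < size s) c i * s`_i.

Definition noetherian (R : comUnitRingType) : Prop :=
  forall I : R -> Prop, is_ideal I ->
    exists s : seq R, forall x, I x <-> in_ideal_gen s x.

(* Local ring: the nonunits form an ideal (closure under addition suffices). *)
Definition local_ring (R : comUnitRingType) : Prop :=
  forall x y : R, maxideal x -> maxideal y -> maxideal (x + y).

Definition local_hom (A B : comUnitRingType) (f : A -> B) : Prop :=
  forall x, maxideal x -> maxideal (f x).

Definition in_maxideal_sq (R : comUnitRingType) (x : R) : Prop :=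
  exists (k : nat) (u v : 'I_k -> R),
    [/\ forall i, maxideal (u i), forall i, maxideal (v i)
      & x = \sum_(i < k) u i * v i].

(* x_1, ..., x_e in m whose classes form a K-basis of m/m^2. *)
Definition cotangent_basis (A : comUnitRingType) (e : nat) (x : 'I_e -> A) : Prop :=
  [/\ forall i, maxideal (x i),
      (forall y, maxideal y ->
         exists a : 'I_e -> A, in_maxideal_sq (y - \sum_(i < e) a i * x i))
    & (forall a : 'I_e -> A, in_maxideal_sq (\sum_(i < e) a i * x i) ->
         forall i, maxideal (a i))].

(* Given the basis x of m/m^2, m/m^2 (x)_K L is identified with L^e, an element
   being represented by lifts v : 'I_e -> B of its coordinates
   (sum_i xbar_i (x) vbar_i).  It lies in the kernel of the natural map to
   n/n^2 iff sum_i f(x_i) v_i lies in n^2 (well defined modulo n). *)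
Definition in_rd_kernel (A B : comUnitRingType) (f : A -> B) (e : nat)
    (x : 'I_e -> A) (v : 'I_e -> B) : Prop :=
  in_maxideal_sq (\sum_(i < e) v i * f (x i)).

(* The kernel has L-dimension d: it has an L-basis of d vectors
   (represented by lifts w j to B^e), with L = B/n. *)
Definition rd_kernel_dim (A B : comUnitRingType) (f : A -> B) (e : nat)
    (x : 'I_e -> A) (d : nat) : Prop :=
  exists w : 'I_d -> 'I_e -> B,
    [/\ forall j, in_rd_kernel f x (w j),
        (forall c : 'I_d -> B,
           (forall i, maxideal (\sum_(j < d) c j * w j i)) ->
           forall j, maxideal (c j))
      & (forall v : 'I_e -> B, in_rd_kernel f x v ->
           exists c : 'I_d -> B,
             forall i, maxideal (v i - \sum_(j < d) c j * w j i))].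

Definition rd_is (A B : comUnitRingType) (f : A -> B) (d : nat) : Prop :=
  (exists (e : nat) (x : 'I_e -> A), cotangent_basis x) /\
  (forall (e : nat) (x : 'I_e -> A), cotangent_basis x -> rd_kernel_dim f x d).

From HB Require Import structures.
From mathcomp Require Import all_boot all_algebra.
From mathcomp Require Import ring.
From Stdlib Require Import Classical.
Set Implicit Arguments. Unset Strict Implicit. Unset Printing Implicit Defensive.
Import GRing.Theory.
Local Open Scope ring_scope.
Local Open Scope quotient_scope.

(* Fix bases of the cotangent spaces m/m^2 of A, B and C and write the images
   of each basis in the next one modulo the square of the maximal ideal: this
   gives matrices M for phi and Q for psi, and psi(M) Q for the composite.
   Over the residue field, the kernel of the cotangent map with matrix X has
   dimension #rows - rank X, independently of the chosen bases because a change
   of basis is invertible modulo m.  Surjectivity of phi makes the reduction of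
   M row-full, i.e. of rank e_B, so rank (psi(M) Q) = rank Q and
   (e_A - rank Q) = (e_A - e_B) + (e_B - rank Q). *)

Section MaximalIdeal.
Variable R : comUnitRingType.
Implicit Types a x y : R.

Lemma maxideal0 : @maxideal R 0.
Proof. by rewrite /maxideal unitr0. Qed.

Lemma maxidealMl a x : maxideal x -> maxideal (a * x).
Proof. by rewrite /maxideal unitrM negb_and => ->; rewrite orbT. Qed.

Lemma in_maxideal_sq0 : @in_maxideal_sq R 0.
Proof.
exists 0%N, (fun _ => 0), (fun _ => 0).
by split=> [_|_|]; [exact: maxideal0 | exact: maxideal0 | rewrite big_ord0].
Qed.

Lemma in_maxideal_sqD x y :
  in_maxideal_sq x -> in_maxideal_sq y -> in_maxideal_sq (x + y).
Proof.
case=> k [u] [v] [hu hv ->] [k' [u'] [v'] [hu' hv' ->]].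
pose glue (T : Type) (s : 'I_k -> T) (s' : 'I_k' -> T) i :=
  match split i with inl j => s j | inr j => s' j end.
exists (k + k')%N, (glue _ u u'), (glue _ v v'); split.
- by move=> i; rewrite /glue; case: split.
- by move=> i; rewrite /glue; case: split.
rewrite big_split_ord /glue; congr (_ + _); apply: eq_bigr => i _.
  by rewrite -[lshift _ i]/(unsplit (inl i)) unsplitK.
by rewrite -[rshift _ i]/(unsplit (inr i)) unsplitK.
Qed.

Lemma in_maxideal_sqMl a x : in_maxideal_sq x -> in_maxideal_sq (a * x).
Proof.
case=> k [u] [v] [hu hv ->]; exists k, (fun i => a * u i), v; split => //.
  by move=> i; apply: maxidealMl.
by rewrite mulr_sumr; apply: eq_bigr => i _; rewrite mulrA.
Qed.

Lemma in_maxideal_sqB x y :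
  in_maxideal_sq x -> in_maxideal_sq y -> in_maxideal_sq (x - y).
Proof. by move=> hx hy; rewrite -mulN1r; apply/in_maxideal_sqD/in_maxideal_sqMl. Qed.

Lemma in_maxideal_sq_sum (I : finType) (F : I -> R) :
  (forall i, in_maxideal_sq (F i)) -> in_maxideal_sq (\sum_i F i).
Proof.
by move=> hF; elim/big_ind: _ => //; [exact: in_maxideal_sq0 | exact: in_maxideal_sqD].
Qed.

Lemma in_maxideal_sq_mul x y : maxideal x -> maxideal y -> in_maxideal_sq (x * y).
Proof.
by move=> hx hy; exists 1%N, (fun _ => x), (fun _ => y); split=> //; rewrite big_ord1.
Qed.

Lemma in_maxideal_sq_congr x y :
  in_maxideal_sq (x - y) -> in_maxideal_sq x <-> in_maxideal_sq y.
Proof.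
move=> hxy; split => h.
  by rewrite -[y](subKr x); apply: in_maxideal_sqB.
by rewrite -[x](subrK y); apply: in_maxideal_sqD.
Qed.

End MaximalIdeal.

Lemma in_maxideal_sq_rmorph (S T : comUnitRingType) (f : {rmorphism S -> T}) x :
  local_hom f -> in_maxideal_sq x -> in_maxideal_sq (f x).
Proof.
move=> hf [k [u [v [hu hv ->]]]]; exists k, (f \o u), (f \o v); split => [i|i|].
- exact: hf.
- exact: hf.
by rewrite rmorph_sum; apply: eq_bigr => i _; rewrite rmorphM.
Qed.

Section ResidueField.
Variables (R : comUnitRingType) (hR : local_ring R).

Definition nonunit : pred R := fun x => x \isn't a GRing.unit.

Lemma nonunit_idealr_closed : idealr_closed nonunit.
Proof.
split=> [|| a x y]; rewrite !unfold_in /nonunit; first exact: maxideal0.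
  by rewrite negbK; exact: unitr1.
by move=> hx hy; apply: hR => //; apply: maxidealMl.
Qed.

Definition maxideal_idealr : idealr R :=
  HB.pack nonunit (isIdealr.Build R nonunit nonunit_idealr_closed).

Definition residue_field := {ideal_quot maxideal_idealr}.
HB.instance Definition _ := GRing.ComNzRing.on residue_field.

Definition res (x : R) : residue_field := \pi x.
HB.instance Definition _ := GRing.RMorphism.copy res (\pi_residue_field).

Lemma res_eq0 x : (res x == 0) = (x \isn't a GRing.unit).
Proof. by rewrite -(rmorph0 res) /res -Quotient.idealrBE subr0. Qed.

Lemma maxidealE x : maxideal x <-> res x = 0.
Proof. by rewrite /maxideal -res_eq0; split=> /eqP. Qed.

Lemma res_repr q : res (repr q) = q.
Proof. exact: reprK. Qed.

Definition res_inv (q : residue_field) := res (repr q)^-1.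

Lemma res_mulVf q : q != 0 -> res_inv q * q = 1.
Proof.
rewrite -[q in q != 0]res_repr res_eq0 negbK => uq.
by rewrite /res_inv -[q in _ * q]res_repr -rmorphM mulVr // rmorph1.
Qed.

Lemma res_inv0 : res_inv 0 = 0.
Proof. by apply/eqP; rewrite /res_inv res_eq0 unitrV -res_eq0 res_repr. Qed.

HB.instance Definition _ :=
  GRing.ComNzRing_isField.Build residue_field res_mulVf res_inv0.

End ResidueField.

Section ResidueMap.
Variables (S T : comUnitRingType) (hS : local_ring S) (hT : local_ring T).
Variables (f : {rmorphism S -> T}) (lf : local_hom f).

Definition res_map (q : residue_field hS) : residue_field hT := res hT (f (repr q)).

Lemma res_mapE a : res_map (res hS a) = res hT (f a).
Proof.
apply/eqP; rewrite -subr_eq0 -rmorphB -rmorphB; apply/eqP/maxidealE/lf/maxidealE.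
by rewrite rmorphB /= res_repr subrr.
Qed.

Lemma res_map_is_zmod_morphism : zmod_morphism res_map.
Proof.
by move=> p q; rewrite -[p]res_repr -[q]res_repr -rmorphB !res_mapE -!rmorphB.
Qed.

Lemma res_map_is_monoid_morphism : monoid_morphism res_map.
Proof.
split; first by rewrite -(rmorph1 (res hS)) res_mapE !rmorph1.
by move=> p q; rewrite -[p]res_repr -[q]res_repr -rmorphM !res_mapE -!rmorphM.
Qed.

HB.instance Definition _ :=
  GRing.isZmodMorphism.Build _ _ res_map res_map_is_zmod_morphism.
HB.instance Definition _ :=
  GRing.isMonoidMorphism.Build _ _ res_map res_map_is_monoid_morphism.

Lemma map_res_rmorph m n (M : 'M[S]_(m, n)) :
  map_mx (res hT) (map_mx f M) = map_mx res_map (map_mx (res hS) M).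
Proof. by apply/matrixP => i j; rewrite !mxE res_mapE. Qed.

Lemma row_full_res_rmorph m n (M : 'M[S]_(m, n)) :
  row_full (map_mx (res hT) (map_mx f M)) = row_full (map_mx (res hS) M).
Proof. by rewrite map_res_rmorph row_full_map. Qed.

End ResidueMap.

Section CotangentCoords.
Variable R : comUnitRingType.

Definition cotangent_coords n e (z : 'I_n -> R) (y : 'I_e -> R) (X : 'M[R]_(e, n)) :=
  forall i, in_maxideal_sq (y i - \sum_k X i k * z k).

Lemma cotangent_coords_exist n e (z : 'I_n -> R) (y : 'I_e -> R) :
  cotangent_basis z -> (forall i, maxideal (y i)) -> exists X, cotangent_coords z y X.
Proof.
case=> _ hspan _ hy; have [a ha] := fin_all_exists (fun i => hspan (y i) (hy i)).
by exists (\matrix_(i, k) a i k) => i; under eq_bigr do rewrite mxE.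
Qed.

Lemma cotangent_coords1 n (z : 'I_n -> R) : cotangent_coords z z 1%:M.
Proof.
move=> i; rewrite (bigD1 i) //= big1 => [|k /negPf]; rewrite mxE ?eqxx.
  by rewrite mul1r addr0 subrr; apply: in_maxideal_sq0.
by rewrite eq_sym => ->; rewrite mul0r.
Qed.

Lemma cotangent_coordsM n e p (z : 'I_n -> R) (y : 'I_e -> R) (w : 'I_p -> R) X Y :
  cotangent_coords z y X -> cotangent_coords y w Y -> cotangent_coords z w (Y *m X).
Proof.
move=> hX hY j.
have -> : w j - \sum_k (Y *m X) j k * z k =
    (w j - \sum_i Y j i * y i) + \sum_i Y j i * (y i - \sum_k X i k * z k).
  suff -> : \sum_i Y j i * (y i - \sum_k X i k * z k) =
      \sum_i Y j i * y i - \sum_k (Y *m X) j k * z k by rewrite addrA subrK.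
  under eq_bigr do rewrite mulrBr mulr_sumr.
  rewrite sumrB exchange_big; congr (_ - _); apply: eq_bigr => k _.
  by rewrite mxE mulr_suml; apply: eq_bigr => i _; rewrite mulrA.
by apply: in_maxideal_sqD => //; apply: in_maxideal_sq_sum => i; apply: in_maxideal_sqMl.
Qed.

Lemma in_maxideal_sq_basis_combination n (z c : 'I_n -> R) : cotangent_basis z ->
  in_maxideal_sq (\sum_k c k * z k) <-> forall k, maxideal (c k).
Proof.
case=> hz _ hindep; split=> [/hindep //|hc].
by apply: in_maxideal_sq_sum => k; apply: in_maxideal_sq_mul.
Qed.

End CotangentCoords.

Lemma cotangent_coords_rmorph (S T : comUnitRingType) (f : {rmorphism S -> T}) n e
    (z : 'I_n -> S) (y : 'I_e -> S) X :
  local_hom f -> cotangent_coords z y X ->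
  cotangent_coords (f \o z) (f \o y) (map_mx f X).
Proof.
move=> lf hX i; suff -> : (f \o y) i - \sum_k map_mx f X i k * (f \o z) k =
    f (y i - \sum_k X i k * z k) by apply: in_maxideal_sq_rmorph.
by rewrite rmorphB rmorph_sum; congr (_ - _); apply: eq_bigr => k _; rewrite rmorphM mxE.
Qed.

Lemma cotangent_basis_maxideal (R : comUnitRingType) n (x : 'I_n -> R) :
  cotangent_basis x -> forall i, maxideal (x i).
Proof. by case. Qed.

Section LocalCotangent.
Variables (R : comUnitRingType) (hR : local_ring R).

Lemma cotangent_coords_uniq n e (z : 'I_n -> R) (y : 'I_e -> R) X X' :
  cotangent_basis z -> cotangent_coords z y X -> cotangent_coords z y X' ->
  map_mx (res hR) X = map_mx (res hR) X'.
Proof.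
move=> hz hX hX'; apply/matrixP => i k; rewrite !mxE; apply/eqP.
rewrite -subr_eq0 -rmorphB; apply/eqP/maxidealE; move: k.
apply: (in_maxideal_sq_basis_combination (fun k => X i k - X' i k) hz).1.
have -> : \sum_k (X i k - X' i k) * z k =
    (y i - \sum_k X' i k * z k) - (y i - \sum_k X i k * z k).
  by rewrite opprB addrC addrA subrK -sumrB; apply: eq_bigr => k _; rewrite mulrBl.
exact: in_maxideal_sqB.
Qed.

Lemma row_full_res_cotangent_coords n e (y : 'I_n -> R) (x : 'I_e -> R) M L :
  cotangent_basis y -> cotangent_coords y x M -> cotangent_coords x y L ->
  row_full (map_mx (res hR) M).
Proof.
move=> hy hM hL; apply/row_fullP; exists (map_mx (res hR) L).
have := cotangent_coords_uniq hy (cotangent_coordsM hM hL) (cotangent_coords1 y).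
by rewrite map_mxM map_mx1.
Qed.

Lemma cotangent_basis_size_le n e (y : 'I_n -> R) (x : 'I_e -> R) :
  cotangent_basis y -> cotangent_basis x -> (n <= e)%N.
Proof.
move=> hy hx; have [M hM] :=
  cotangent_coords_exist hy (cotangent_basis_maxideal hx).
have [L hL] := cotangent_coords_exist hx (cotangent_basis_maxideal hy).
have /eqP <- := row_full_res_cotangent_coords hy hM hL; exact: rank_leq_row.
Qed.

Lemma cotangent_basis_size_uniq n e (y : 'I_n -> R) (x : 'I_e -> R) :
  cotangent_basis y -> cotangent_basis x -> n = e.
Proof.
move=> hy hx; apply/eqP.
by rewrite eqn_leq (cotangent_basis_size_le hy hx) (cotangent_basis_size_le hx hy).
Qed.

Lemma rd_kernel_dim_kermx (S : comUnitRingType) (f : S -> R) n e (x : 'I_e -> S)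
    (M : 'M[residue_field hR]_(e, n)) :
  (forall v, in_rd_kernel f x v <-> (\row_i res hR (v i)) *m M = 0) ->
  rd_kernel_dim f x (e - \rank M).
Proof.
move=> hker; rewrite -mxrank_ker; set K := row_base (kermx M).
exists (fun j i => repr (K j i)); split.
- move=> j; apply/hker.
  have -> : \row_i res hR (repr (K j i)) = row j K.
    by apply/rowP => i; rewrite !mxE res_repr.
  by apply/sub_kermxP; rewrite (submx_trans (row_sub j K)) ?eq_row_base.
- move=> c hc; have : (\row_j res hR (c j)) *m K == 0.
    apply/eqP/rowP => i; rewrite !mxE -[RHS]((maxidealE hR _).1 (hc i)) rmorph_sum.
    by apply: eq_bigr => j _; rewrite mxE rmorphM /= res_repr.
  rewrite mulmx_free_eq0 ?row_base_free // => /eqP/rowP c0 j.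
  by apply/maxidealE; have := c0 j; rewrite !mxE.
- move=> v /hker /sub_kermxP; rewrite -(eq_row_base (kermx M)) -/K => /submxP [D hD].
  exists (fun j => repr (D 0 j)) => i; apply/maxidealE; rewrite rmorphB rmorph_sum /=.
  apply/eqP; rewrite subr_eq0; apply/eqP; move/rowP: hD => /(_ i); rewrite !mxE => ->.
  by apply: eq_bigr => j _; rewrite rmorphM /= !res_repr.
Qed.

Lemma rd_kernel_dim_cotangent_coords (S : comUnitRingType) (f : S -> R) n e
    (z : 'I_n -> R) (x : 'I_e -> S) X :
  cotangent_basis z -> cotangent_coords z (f \o x) X ->
  rd_kernel_dim f x (e - \rank (map_mx (res hR) X)).
Proof.
move=> hz hX; apply: rd_kernel_dim_kermx => v.
have hv : cotangent_coords (f \o x) (fun _ : 'I_1 => \sum_i v i * f (x i)) (\row_i v i).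
  move=> i; rewrite [X in _ - X](eq_bigr (fun k => v k * f (x k))) => [|k _].
    by rewrite subrr; apply: in_maxideal_sq0.
  by rewrite mxE.
rewrite /in_rd_kernel (in_maxideal_sq_congr (cotangent_coordsM hX hv ord0)).
have -> : \row_i res hR (v i) = map_mx (res hR) (\row_i v i).
  by apply/rowP => i; rewrite !mxE.
rewrite (in_maxideal_sq_basis_combination _ hz) -map_mxM; split=> [h0|/rowP h0 k].
  by apply/rowP => k; rewrite [LHS]mxE [RHS]mxE; apply/maxidealE/h0.
by apply/maxidealE; have := h0 k; rewrite !mxE.
Qed.

End LocalCotangent.

Definition cotangent_spanning (R : comUnitRingType) n (x : 'I_n -> R) :=
  forall y, maxideal y -> exists a : 'I_n -> R, in_maxideal_sq (y - \sum_i a i * x i).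

Lemma cotangent_spanning_lift (R : comUnitRingType) n (x a : 'I_n.+1 -> R) j :
  cotangent_spanning x -> in_maxideal_sq (\sum_i a i * x i) -> a j \is a GRing.unit ->
  cotangent_spanning (x \o lift j).
Proof.
move=> hspan ha uj y /hspan [b hb].
exists (fun i => b (lift j i) - b j / a j * a (lift j i)).
suff -> : y - \sum_i (b (lift j i) - b j / a j * a (lift j i)) * (x \o lift j) i =
    (y - \sum_i b i * x i) + b j / a j * \sum_i a i * x i.
  by apply: in_maxideal_sqD => //; apply: in_maxideal_sqMl.
rewrite (bigD1_ord j) //= (bigD1_ord j) //= mulrDr mulrA divrK //.
set c := b j / a j; under eq_bigr do rewrite mulrBl -mulrA.
by rewrite sumrB mulr_sumr; ring.
Qed.

Lemma cotangent_basis_of_spanning (R : comUnitRingType) n (x : 'I_n -> R) :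
  (forall i, maxideal (x i)) -> cotangent_spanning x ->
  exists e (x' : 'I_e -> R), cotangent_basis x'.
Proof.
elim: n x => [|n IH] x hx hspan.
  by exists 0%N, x; split=> // a _ [].
have [hindep|] := classic (forall a, in_maxideal_sq (\sum_i a i * x i) ->
  forall i, maxideal (a i)).
  by exists n.+1, x; split.
move=> /not_all_ex_not [a /(@imply_to_and (in_maxideal_sq _)) [ha]].
case/not_all_ex_not=> j /negP/negbNE uj.
exact: IH (fun i => hx (lift j i)) (cotangent_spanning_lift hspan ha uj).
Qed.

Lemma cotangent_basis_exists (R : comUnitRingType) :
  local_ring R -> noetherian R -> exists e (x : 'I_e -> R), cotangent_basis x.
Proof.
move=> hR nR.
have [|s hs] := nR (@maxideal R).
  by split=> [||a x]; [exact: maxideal0 | exact: hR | exact: maxidealMl].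
apply: (@cotangent_basis_of_spanning R (size s) (fun i => s`_i)).
- move=> i; apply/hs; exists (fun k => (k == i)%:R).
  by rewrite (bigD1 i) //= eqxx mul1r big1 ?addr0 // => k /negPf ->; rewrite mul0r.
- move=> y /hs [c ->]; exists c; rewrite subrr; exact: in_maxideal_sq0.
Qed.

Section RegularityDefect.
Variables (S T : comUnitRingType) (hS : local_ring S) (hT : local_ring T).
Variables (f : {rmorphism S -> T}) (lf : local_hom f).

Lemma rd_is_cotangent_rank e n (y : 'I_e -> S) (z : 'I_n -> T) Q :
  cotangent_basis y -> cotangent_basis z -> cotangent_coords z (f \o y) Q ->
  rd_is f (e - \rank (map_mx (res hT) Q)).
Proof.
move=> hy hz hQ; split=> [|e' x hx]; first by exists e, y.
have ee' := cotangent_basis_size_uniq hS hx hy; subst e'.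
have [P hP] := cotangent_coords_exist hy (cotangent_basis_maxideal hx).
have [L hL] := cotangent_coords_exist hx (cotangent_basis_maxideal hy).
have fullP := row_full_res_cotangent_coords hS hy hP hL.
have hPQ := cotangent_coordsM hQ (cotangent_coords_rmorph lf hP).
have := rd_kernel_dim_cotangent_coords hT hz hPQ.
by rewrite map_mxM (eqmxMfull _ _) ?row_full_res_rmorph.
Qed.

Lemma row_full_res_coords_surjective e n (x : 'I_e -> S) (y : 'I_n -> T) M :
  (forall b, exists a, f a = b) ->
  cotangent_basis x -> cotangent_basis y -> cotangent_coords y (f \o x) M ->
  row_full (map_mx (res hT) M).
Proof.
move=> fsurj hx hy hM; have [a ha] := fin_all_exists (fun k => fsurj (y k)).
have [P hP] : exists P, cotangent_coords x a P.
  apply: cotangent_coords_exist hx _ => k; apply: contra (cotangent_basis_maxideal hy k).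
  by rewrite -ha; apply: rmorph_unit.
apply: (row_full_res_cotangent_coords hT hy hM (L := map_mx f P)) => k.
by rewrite -ha; apply: cotangent_coords_rmorph lf hP k.
Qed.

End RegularityDefect.

Theorem corollary3p10 (A B C : comUnitRingType)
    (phi : {rmorphism A -> B}) (psi : {rmorphism B -> C}) :
  noetherian A -> noetherian B -> noetherian C ->
  local_ring A -> local_ring B -> local_ring C ->
  local_hom phi -> local_hom psi ->
  (forall b : B, exists a : A, phi a = b) ->
  exists d1 d2 : nat,
    [/\ rd_is phi d1, rd_is psi d2 & rd_is (psi \o phi) (d1 + d2)%N].
Proof.
move=> nA nB nC hA hB hC lphi lpsi phi_surj.
have [eA [x hx]] := cotangent_basis_exists hA nA.
have [eB [y hy]] := cotangent_basis_exists hB nB.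
have [eC [z hz]] := cotangent_basis_exists hC nC.
have [M hM] :=
  cotangent_coords_exist hy (fun i => lphi _ (cotangent_basis_maxideal hx i)).
have [Q hQ] :=
  cotangent_coords_exist hz (fun i => lpsi _ (cotangent_basis_maxideal hy i)).
have fullM := row_full_res_coords_surjective hB lphi phi_surj hx hy hM.
have lcomp : local_hom (psi \o phi) by move=> a /lphi /lpsi.
have hMQ := cotangent_coordsM hQ (cotangent_coords_rmorph lpsi hM).
exists (eA - eB)%N, (eB - \rank (map_mx (res hC) Q))%N; split.
- by rewrite -(eqP fullM); exact: (rd_is_cotangent_rank hA hB lphi hx hy hM).
- exact: (rd_is_cotangent_rank hB hC lpsi hy hz hQ).
- have := rd_is_cotangent_rank hA hC lcomp hx hz hMQ.
  rewrite map_mxM (eqmxMfull _ _) ?row_full_res_rmorph //.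
  by rewrite addnBA ?rank_leq_row // subnK // -(eqP fullM) rank_leq_row.
Qed.
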